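(* Let $k$ be a Brauer field and let $K/k$ be a field extension such that the group $K^{\times}/(k^{\times}\cdot(K^{\times})^d)$ is finite for all $d\ge 1$. Then $K$ is a Brauer field.
   Context: A field $k$ is a Brauer field if for every $d\ge 1$ there is a number $N_k(d)$ such that every equation $a_1x_1^d+\cdots+a_nx_n^d=0$ with $n>N_k(d)$ and $a_i\in k$ has a non-trivial solution in $k^n$. *)

From HB Require Import structures.
From mathcomp Require Import all_boot all_order all_algebra.
Set Implicit Arguments. Unset Strict Implicit. Unset Printing Implicit Defensive.
Import GRing.Theory.
Local Open Scope ring_scope.

Definition brauer_field (F : fieldType) : Prop :=
  forall d : nat, (0 < d)%N ->
    exists N : nat, forall (n : nat) (a : 'I_n -> F), (N < n)%N ->
      exists x : 'I_n -> F, (exists i, x i != 0) /\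
        \sum_(i < n) a i * x i ^+ d = 0.

Definition in_base_times_powers (k K : fieldType) (f : {rmorphism k -> K})
    (d : nat) (z : K) : Prop :=
  exists a : k, exists y : K, a != 0 /\ y != 0 /\ z = f a * y ^+ d.

(* The quotient group K^x / (k^x . (K^x)^d) is finite: there are finitely many
   nonzero elements r_1..r_m of K such that every nonzero x of K lies in one of
   the cosets r_j . k^x . (K^x)^d. *)
Definition finite_quotient_mod_powers (k K : fieldType) (f : {rmorphism k -> K})
    (d : nat) : Prop :=
  exists s : seq K, (forall r, r \in s -> r != 0) /\
    forall x : K, x != 0 -> exists2 r, r \in s &
      in_base_times_powers f d (x / r).

(* Write every nonzero coefficient a_i as r_j(i) * f(b_i) * y_i^d, where the r_j are
   the finitely many coset representatives of K^x / (k^x (K^x)^d).  If there are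
   more than m * N_k(d) coefficients, m the number of cosets, some coset contains
   more than N_k(d) of them; a nontrivial zero x of the form sum b_i x_i^d over k
   for those indices gives the zero X_i = f(x_i) / y_i of the original form, since
   sum a_i X_i^d = r_j * f(sum b_i x_i^d). *)

From mathcomp Require Import all_boot all_order all_algebra.
From mathcomp Require Import ring.

Set Implicit Arguments.
Unset Strict Implicit.
Unset Printing Implicit Defensive.

Import GRing.Theory.

Lemma pigeonhole_fiber (T U : finType) (g : T -> U) (N : nat) :
  (#|U| * N < #|T|)%N -> exists y, (N < #|[set x | g x == y]|)%N.
Proof.
move=> ltUNT; apply/existsP; apply: contraLR ltUNT => /existsPn small_fibers.
rewrite -leqNgt -sum1_card (partition_big g predT) //= -sum_nat_const.
by apply: leq_sum => y _; rewrite sum1dep_card leqNgt small_fibers.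
Qed.

Local Open Scope ring_scope.

Definition diag_isotropic (F : fieldType) (I : finType) (d : nat) (a : I -> F) :=
  exists x : I -> F, (exists i, x i != 0) /\ \sum_i a i * x i ^+ d = 0.

Section ZeroExtension.

Variables (F : fieldType) (I : finType) (d : nat).
Hypothesis d_gt0 : (0 < d)%N.

Lemma diag_isotropic_coef0 (a : I -> F) (i : I) : a i = 0 -> diag_isotropic d a.
Proof.
move=> ai0; exists (fun j => (j == i)%:R); split; first by exists i; rewrite eqxx oner_eq0.
apply: big1 => j _; case: eqP => [-> | _]; first by rewrite ai0 mul0r.
by rewrite expr0n eqn0Ngt d_gt0 mulr0.
Qed.

Lemma diag_isotropic_enum_val (S : {set I}) (a : I -> F) :
  diag_isotropic d (fun t : 'I_#|S| => a (enum_val t)) -> diag_isotropic d a.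
Proof.
move=> [x [[t0 xt0_nz] x_zero]].
pose x' i := if i \in S then x (enum_rank_in (enum_valP t0) i) else 0.
exists x'; split.
  by exists (enum_val t0); rewrite /x' enum_valP enum_valK_in.
rewrite (bigID (mem S)) /= [X in _ + X]big1 ?addr0 => [|i /negbTE iS]; last first.
  by rewrite /x' iS expr0n eqn0Ngt d_gt0 mulr0.
rewrite big_enum_val -[RHS]x_zero; apply: eq_bigr => t _.
by rewrite /x' enum_valP enum_valK_in.
Qed.

End ZeroExtension.

Lemma diag_isotropic_rmorph (k K : fieldType) (f : {rmorphism k -> K}) (I : finType)
    (d : nat) (c : K) (b : I -> k) (y : I -> K) (a : I -> K) :
    (forall i, y i != 0) -> (forall i, a i = c * f (b i) * y i ^+ d) ->
  diag_isotropic d b -> diag_isotropic d a.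
Proof.
move=> y_nz Ea [x [[i0 xi0_nz] x_zero]].
exists (fun i => f (x i) / y i); split.
  by exists i0; rewrite mulf_neq0 ?invr_eq0 ?fmorph_eq0.
transitivity (c * f (\sum_i b i * x i ^+ d)); last by rewrite x_zero rmorph0 mulr0.
rewrite rmorph_sum mulr_sumr; apply: eq_bigr => i _.
rewrite Ea expr_div_n rmorphM rmorphXn.
by field; rewrite expf_neq0.
Qed.

Lemma finite_quotient_mod_powers_decomp (k K : fieldType) (f : {rmorphism k -> K})
    (d : nat) :
    finite_quotient_mod_powers f d ->
  exists s : seq K, forall (I : finType) (a : I -> K), (forall i, a i != 0) ->
    exists (j : I -> 'I_(size s)) (b : I -> k) (y : I -> K),
      (forall i, y i != 0) /\ forall i, a i = s`_(j i) * f (b i) * y i ^+ d.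
Proof.
move=> [s [s_nz cosets]]; exists s => I a a_nz.
have decomp i : exists t : 'I_(size s) * k * K,
    t.2 != 0 /\ a i = s`_t.1.1 * f t.1.2 * t.2 ^+ d.
  have [r rs [b [y [_ [y_nz Eb]]]]] := cosets _ (a_nz i).
  have r_idx : (index r s < size s)%N by rewrite index_mem.
  exists (Ordinal r_idx, b, y); split => //=.
  by rewrite nth_index // -mulrA -Eb mulrC divfK ?s_nz.
have [t Et] := fin_all_exists decomp.
by exists (fun i => (t i).1.1), (fun i => (t i).1.2), (fun i => (t i).2); split => i;
  case: (Et i).
Qed.

Theorem proposition2p4 (k K : fieldType) (f : {rmorphism k -> K}) :
  brauer_field k ->
  (forall d : nat, (0 < d)%N -> finite_quotient_mod_powers f d) ->
  brauer_field K.
Proof.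
move=> brauer_k quot_K d d_gt0.
have [N isotropic_k] := brauer_k d d_gt0.
have [s decomp] := finite_quotient_mod_powers_decomp (quot_K d d_gt0).
exists (size s * N)%N => n a lt_sN_n.
have [/existsP [i /eqP ai0] | /existsPn a_nz] := boolP [exists i, a i == 0].
  exact: diag_isotropic_coef0 ai0.
have [j [b [y [y_nz Ea]]]] := decomp _ a a_nz.
have [|c large_c] := @pigeonhole_fiber _ _ j N; first by rewrite !card_ord.
apply: (diag_isotropic_enum_val d_gt0 (S := [set i | j i == c])).
apply: (diag_isotropic_rmorph (c := s`_c) (y := y \o enum_val) (b := b \o enum_val)).
- by move=> t; apply: y_nz.
- by move=> t; have := enum_valP t; rewrite inE Ea => /eqP ->.
- exact: isotropic_k.
Qed.
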